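(* Let $\lambda<\mathfrak u$ be a cardinal and let $X$ be a set of reals with $X=\bigcup_{\alpha<\lambda}X_\alpha$, where each subspace $X_\alpha$ satisfies $\mathrm{Split}(\mathrm T,\mathrm T)$. Then $X$ satisfies $\mathrm{Split}(\mathrm T,\mathrm T)$. The same holds with $\mathrm{Split}(B_{\mathrm T},B_{\mathrm T})$ in place of $\mathrm{Split}(\mathrm T,\mathrm T)$, and with $\mathrm{Split}(C_{\mathrm T},C_{\mathrm T})$ in place of $\mathrm{Split}(\mathrm T,\mathrm T)$. In particular these three properties are closed under countable unions.
   Context: A set of reals is an infinite topological space homeomorphic to a subset of $\mathbb R$. A cover of a space $X$ is a family $\mathcal U$ of subsets of $X$ with $\bigcup\mathcal U=X$ such that $X\not\subseteq U$ for all $U\in\mathcal U$. It is a $\tau$-cover if every $x\in X$ lies in infinitely many members and for all $x,y\in X$ at least one of $\{U\in\mathcal U: x\in U, y\notin U\}$, $\{U\in\mathcal U: y\in U, x\notin U\}$ is finite. $\mathrm T$ denotes the collection of open $\tau$-covers, $B_{\mathrm T}$ of countable Borel $\tau$-covers, $C_{\mathrm T}$ of countable clopen $\tau$-covers of $X$. $X$ satisfies $\mathrm{Split}(\mathfrak U,\mathfrak V)$ if every $\mathcal U\in\mathfrak U$ can be partitioned into two disjoint subfamilies each containing a subfamily belonging to $\mathfrak V$. $\mathfrak u$ is the minimal cardinality of a family $B$ of infinite subsets of $\mathbb N$ that is a base for a nonprincipal ultrafilter $U$ on $\mathbb N$, i.e. $U=\{a\subseteq\mathbb N:\exists b\in B\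 (b\setminus a\text{ finite})\}$. *)

From HB Require Import structures.
From mathcomp Require Import all_boot all_order all_algebra.
From mathcomp Require Import all_classical all_reals topology normedtype measure.
Set Implicit Arguments. Unset Strict Implicit. Unset Printing Implicit Defensive.
Import Order.TTheory GRing.Theory Num.Theory.
Import numFieldNormedType.Exports.
Local Open Scope classical_set_scope.

(* A "set of reals" is modelled as a subset X of the real line with the
   subspace topology (all notions below are topological invariants). *)
Section Defs.
Variable R : realType.

Definition open_in (A U : set R) := exists V : set R, open V /\ U = A `&` V.
Definition closed_in (A U : set R) := exists V : set R, closed V /\ U = A `&` V.
Definition clopen_in (A U : set R) := open_in A U /\ closed_in A U.
Definition borel_set (V : set R) := <<s [set W : set R | open W] >> V.
Definition borel_in (A U : set R) := exists V : set R, borel_set V /\ U = A `&` V.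

Definition is_cover (A : set R) (F : set (set R)) :=
  [/\ (forall U, F U -> U `<=` A),
      \bigcup_(U in F) U = A &
      (forall U, F U -> ~ (A `<=` U))].

Definition tau_cover (A : set R) (F : set (set R)) :=
  [/\ is_cover A F,
      (forall x, A x -> infinite_set [set U | F U /\ U x]) &
      (forall x y, A x -> A y ->
         finite_set [set U | F U /\ U x /\ ~ U y] \/
         finite_set [set U | F U /\ U y /\ ~ U x])].

Definition Tcovers (A : set R) : set (set (set R)) :=
  [set F | tau_cover A F /\ (forall U, F U -> open_in A U)].
Definition BTcovers (A : set R) : set (set (set R)) :=
  [set F | [/\ tau_cover A F, countable F & (forall U, F U -> borel_in A U)]].
Definition CTcovers (A : set R) : set (set (set R)) :=
  [set F | [/\ tau_cover A F, countable F & (forall U, F U -> clopen_in A U)]].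

Definition SplitProp (UU VV : set (set (set R))) :=
  forall F, UU F -> exists F1 F2 : set (set R),
    [/\ F1 `|` F2 = F, F1 `&` F2 = set0,
        (exists2 G1, G1 `<=` F1 & VV G1) &
        (exists2 G2, G2 `<=` F2 & VV G2)].

End Defs.

Inductive tau_kind := kind_T | kind_BT | kind_CT.

Definition covers_of (k : tau_kind) (R : realType) : set R -> set (set (set R)) :=
  match k with
  | kind_T => @Tcovers R
  | kind_BT => @BTcovers R
  | kind_CT => @CTcovers R
  end.

Definition nonprincipal_ultrafilter (U : set (set nat)) :=
  [/\ (forall a b, U a -> U b -> U (a `&` b)),
      (forall a b, U a -> a `<=` b -> U b),
      ~ U set0,
      (forall a, U a \/ U (~` a)) &
      (forall a, finite_set a -> ~ U a)].

Definition u_base (B : set (set nat)) :=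
  (forall b, B b -> infinite_set b) /\
  exists U, nonprincipal_ultrafilter U /\
            U = [set a | exists2 b, B b & finite_set (b `\` a)].

Definition lt_u (I : Type) :=
  forall B : set (set nat), u_base B ->
    ([set: I] #<= B)%card /\ ~ (B #<= [set: I])%card.

From HB Require Import structures.
From mathcomp Require Import all_boot all_order all_algebra.
From mathcomp Require Import all_classical all_reals topology normedtype measure.
Set Implicit Arguments.
Unset Strict Implicit.
Unset Printing Implicit Defensive.
Import Order.TTheory GRing.Theory Num.Theory.
Import numFieldNormedType.Exports.
Local Open Scope classical_set_scope.

(* Enumerate a countable part (e n) of the tau-cover in which every point
   still lies in infinitely many members (for open covers this uses second
   countability), and let m x := [set n | e n x]; by the tau property the m x
   form a chain under almost inclusion.  If some a splits every m x into two
   infinite parts, the members indexed by a and the remaining ones split the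
   cover.  Otherwise every a is decided by some m x, so the m x generate a
   nonprincipal ultrafilter.  Splitting the traces of the e n on each X_i then
   produces a point z_i with m z_i almost included in m y for every y in X_i,
   so the m z_i form a base of that ultrafilter of size at most |I|.  This
   contradicts |I| < u, and also the countability of I, because no
   nonprincipal ultrafilter has a countable base. *)

Definition almost_sub {T} (a b : set T) := finite_set (a `\` b).

Lemma subset_almost_sub {T} (a b : set T) : a `<=` b -> almost_sub a b.
Proof. by move=> ab; apply: sub_finite_set (finite_set0 T) => x [/ab]. Qed.

Lemma almost_sub_trans {T} (a b c : set T) :
  almost_sub a b -> almost_sub b c -> almost_sub a c.
Proof.
move=> ab bc; have : finite_set (a `\` b `|` b `\` c) by rewrite finite_setU.
by apply: sub_finite_set => x [ax ncx]; have [bx|nbx] := pselect (b x); [right|left].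
Qed.

Lemma almost_subI {T} (a b c : set T) :
  almost_sub a b -> almost_sub a c -> almost_sub a (b `&` c).
Proof.
move=> ab ac; have : finite_set (a `\` b `|` a `\` c) by rewrite finite_setU.
by apply: sub_finite_set => x [ax nbc]; have [bx|nbx] := pselect (b x);
  [right; split => // cx; apply: nbc|left].
Qed.

Lemma almost_sub_infinite {T} (a b : set T) :
  almost_sub a b -> infinite_set a -> infinite_set b.
Proof.
move=> ab ia fb; apply: ia; have : finite_set (a `\` b `|` b) by rewrite finite_setU.
by apply: sub_finite_set => x ax; have [bx|nbx] := pselect (b x); [right|left].
Qed.

Definition almost_filter {T} (B : set (set T)) :=
  [set a | exists2 b, B b & almost_sub b a].

Lemma almost_filter_base {T} (B : set (set T)) b : B b -> almost_filter B b.
Proof. by move=> Bb; exists b => //; apply: subset_almost_sub. Qed.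

Lemma almost_filterS {T} (B : set (set T)) a b :
  almost_filter B a -> a `<=` b -> almost_filter B b.
Proof.
move=> [c Bc ca] ab; exists c => //.
exact: almost_sub_trans ca (subset_almost_sub ab).
Qed.

Lemma almost_filter_coinitial {T} (B C : set (set T)) : B `<=` C ->
  (forall c, C c -> exists2 b, B b & almost_sub b c) ->
  almost_filter B = almost_filter C.
Proof.
move=> BC Ccoi; apply/seteqP; split=> a [c Cc ca]; first by exists c => //; apply: BC.
by have [b Bb bc] := Ccoi c Cc; exists b => //; apply: almost_sub_trans bc ca.
Qed.

Section AlmostChain.
Variable B : set (set nat).
Hypothesis B_infinite : forall b, B b -> infinite_set b.
Hypothesis B_chain : forall b c, B b -> B c -> almost_sub b c \/ almost_sub c b.
Hypothesis B_decides : forall a, exists2 b, B b & almost_sub b a \/ almost_sub b (~` a).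

Lemma almost_filterI a b :
  almost_filter B a -> almost_filter B b -> almost_filter B (a `&` b).
Proof.
move=> [c Bc ca] [d Bd db]; have [cd|dc] := B_chain Bc Bd.
- by exists c => //; apply: almost_subI ca (almost_sub_trans cd db).
- by exists d => //; apply: almost_subI (almost_sub_trans dc ca) db.
Qed.

Lemma almost_filter_ultrafilter : nonprincipal_ultrafilter (almost_filter B).
Proof.
split.
- exact: almost_filterI.
- exact: almost_filterS.
- by move=> [b Bb /almost_sub_infinite /(_ (B_infinite Bb))]; apply; apply: finite_set0.
- by move=> a; have [b Bb [ba|ba]] := B_decides a; [left|right]; exists b.
- by move=> a fa [b Bb /almost_sub_infinite /(_ (B_infinite Bb))].
Qed.

End AlmostChain.

Section Ultrafilter.
Variable U : set (set nat).
Hypothesis U_ultra : nonprincipal_ultrafilter U.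

Lemma ultrafilter_neq0 a : U a -> a !=set0.
Proof.
case: U_ultra => _ _ U0 _ _ Ua; apply/set0P/eqP => a0.
by apply: U0; rewrite -a0.
Qed.

Lemma ultrafilter_bigcup (s : nat -> set nat) n :
  U (\bigcup_(j in `I_n) s j) -> exists2 j, (j < n)%N & U (s j).
Proof.
case: U_ultra => UI Uup U0 Uult _.
elim: n => [|n IH] Us; first by exfalso; apply: U0; rewrite bigcup0 in Us.
have [Usn|UCsn] := Uult (s n); first by exists n.
have [j jn Usj] : exists2 j, (j < n)%N & U (s j).
  apply: IH; apply: Uup (UI _ _ Us UCsn) _ => x [[j /= jn sjx] nsnx].
  exists j => //=; rewrite ltn_neqAle -ltnS jn andbT.
  by apply/eqP => ej; apply: nsnx; rewrite -ej.
by exists j => //; rewrite ltnW.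
Qed.

End Ultrafilter.

Lemma infinite_set_gt (S : set nat) N : infinite_set S -> exists n, S n /\ (N < n)%N.
Proof.
move=> /infinite_setD /(_ (finite_II N.+1)) /infinite_setN0 [n [Sn /= nN]].
by exists n; rewrite ltnNge -ltnS; split => //; apply/negP.
Qed.

Lemma infinite_set_geq n : infinite_set [set k | (n <= k)%N].
Proof. by rewrite -setC_I -setTD; apply: infinite_setD infinite_nat (finite_II n). Qed.

Lemma injective_image_infinite {T U : Type} (f : T -> U) (S : set T) :
  injective f -> infinite_set S -> infinite_set (f @` S).
Proof.
move=> f_inj iS fS; apply: iS.
have f_inj_in : {in f @^-1` (f @` S) &, injective f} by move=> a b _ _ /f_inj.
by apply: sub_finite_set (finite_preimage f_inj_in fS) => t St; exists t.
Qed.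

Lemma increasing_choice (c : nat -> set nat) : (forall n, infinite_set (c n)) ->
  exists w : nat -> nat, (forall k, c k (w k)) /\ {homo w : i j / (i < j)%N}.
Proof.
move=> c_inf; have /choice [next nextP] : forall p : nat * nat,
    exists n, c p.1 n /\ (p.2 < n)%N by move=> [k N]; apply: infinite_set_gt.
pose w := fix w k := if k is k'.+1 then next (k, w k') else next (0, 0)%N.
exists w; split; first by case=> [|k]; apply: (nextP (_, _)).1.
by apply: homo_ltn => [? ? ?|k]; [apply: ltn_trans|apply: (nextP (_, _)).2].
Qed.

Lemma split_decreasing (c : nat -> set nat) :
  (forall n, infinite_set (c n)) -> (forall n, c n.+1 `<=` c n) ->
  exists a, forall n, infinite_set (c n `&` a) /\ infinite_set (c n `\` a).
Proof.
move=> c_inf c_decr; have [w [wc w_incr]] := increasing_choice c_inf.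
have w_inj : injective w := incn_inj (leq_mono w_incr).
have c_mono n k : (n <= k)%N -> c k `<=` c n.
  apply: (@homo_leq _ c (fun A B => B `<=` A)) => [A|B A C BA CB|//].
    exact: subset_refl.
  exact: subset_trans CB BA.
have w_even_inj : injective (w \o double) by move=> i j /w_inj /double_inj.
have w_odd_inj : injective (w \o (fun k => k.*2.+1)) by move=> i j /w_inj [/double_inj].
exists [set w k.*2 | k in setT] => n; split.
- apply: sub_infinite_set (injective_image_infinite w_even_inj (@infinite_set_geq n)).
  move=> _ [k nk <-]; split; last by exists k.
  by apply: c_mono (wc _); rewrite (leq_trans nk) // -addnn leq_addr.
- apply: sub_infinite_set (injective_image_infinite w_odd_inj (@infinite_set_geq n)).
  move=> _ [k nk <-]; split.
    by apply: c_mono (wc _); rewrite (leq_trans nk) // -addnn ltnW // ltnS leq_addr.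
  by move=> [j _ /w_inj /(congr1 odd)]; rewrite /= !odd_double.
Qed.

Lemma u_base_uncountable (B : set (set nat)) : u_base B -> ~ countable B.
Proof.
move=> [_ [U [[UI _ U0 Uult Ufin] UE]]] cB.
have BU b : B b -> U b.
  by move=> Bb; rewrite UE; exists b => //; rewrite setDv; apply: finite_set0.
have [b0 Bb0] : B !=set0.
  have : U setT by case: (Uult setT) => // UT; exfalso; apply: U0; rewrite -setCT.
  by rewrite UE => -[b Bb _]; exists b.
have /pcard_surjP [g g_surj] := cB.
pose f n := if pselect (B (g n)) is left _ then g n else b0.
have fB n : B (f n) by rewrite /f; case: pselect.
have f_surj b : B b -> exists n, f n = b.
  by move=> Bb; have [n _ gn] := g_surj b Bb; exists n; rewrite /f gn; case: pselect.
pose c := fix c n := if n is n'.+1 then c n' `&` f n else f 0%N.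
have cU n : U (c n) by elim: n => [|n IH] /=; [apply: BU|apply: UI => //; apply: BU].
have cf n : c n `<=` f n by case: n => [|n] // x [].
have [a a_splits] : exists a, forall n,
    infinite_set (c n `&` a) /\ infinite_set (c n `\` a).
  by apply: split_decreasing => [n /(Ufin _)|n x []//]; apply; apply: cU.
case: (Uult a); rewrite UE => -[b /f_surj [n <-] fin].
- by apply: (a_splits n).2; apply: sub_finite_set fin => x [/cf].
- by apply: (a_splits n).1; apply: sub_finite_set fin => x [/cf fx ax]; split.
Qed.

Lemma countable_subset_or_infinite (T : pointedType) (S : set T) :
  exists T', [/\ T' `<=` S, countable T' & T' = S \/ infinite_set T'].
Proof.
have [fS|iS] := pselect (finite_set S).
  by exists S; split => //; [apply: finite_set_countable|left].
have /infiniteP /pcard_leP [f] := iS.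
exists (f @` setT); split; first by move=> U [n _ <-]; apply: funS.
- by apply: card_le_trans (card_image_le _ _) _; apply: card_lexx.
- right; apply: injective_image_infinite infinite_nat.
  by move=> a b; apply: inj; rewrite inE.
Qed.

Section Covers.
Variable R : realType.

Definition kind_set (k : tau_kind) (A U : set R) :=
  match k with
  | kind_T => open_in A U
  | kind_BT => borel_in A U
  | kind_CT => clopen_in A U
  end.

Lemma covers_ofE k (A : set R) F : covers_of k A F <->
  [/\ tau_cover A F, (k <> kind_T -> countable F) & forall U, F U -> kind_set k A U].
Proof.
case: k => /=; split.
- by move=> [? ?]; split.
- by move=> [? _ ?]; split.
- by move=> [? ? ?]; split.
- by move=> [? cF ?]; split => //; apply: cF.
- by move=> [? ? ?]; split.
- by move=> [? cF ?]; split => //; apply: cF.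
Qed.

Lemma kind_set_trace k (X Y U : set R) :
  Y `<=` X -> kind_set k X U -> kind_set k Y (U `&` Y).
Proof.
move=> YX; have trace V : (X `&` V) `&` Y = Y `&` V.
  by rewrite setIC setIA; congr (_ `&` _); apply/setIidPl.
case: k => /=.
- by move=> [V [oV ->]]; exists V; rewrite trace.
- by move=> [V [bV ->]]; exists V; rewrite trace.
- move=> [[V [oV eV]] [W [cW eW]]].
  by split; [exists V; rewrite eV trace|exists W; rewrite eW trace].
Qed.

Lemma covers_of_sub k (X : set R) F G : covers_of k X F -> G `<=` F ->
  (forall x, X x -> infinite_set [set U | G U /\ U x]) -> covers_of k X G.
Proof.
move=> /covers_ofE [[[FX _ FnX] _ F_chain] F_cnt F_kind] GF G_inf.
apply/covers_ofE; split.
- split=> //; last first.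
    by move=> x y Xx Xy; case: (F_chain x y Xx Xy) => fin; [left|right];
      apply: sub_finite_set fin => U [/GF].
  split; [by move=> U /GF /FX|apply/seteqP; split|by move=> U /GF /FnX].
    by move=> x [U /GF /FX]; apply.
  by move=> x Xx; have [U [GU Ux]] := infinite_setN0 (G_inf x Xx); exists U.
- by move=> kT; apply: sub_countable (F_cnt kT); apply: subset_card_le.
- by move=> U /GF; apply: F_kind.
Qed.

Definition rat_itv (q : rat * rat) : set R := [set r | (ratr q.1 < r < ratr q.2)%R].

Lemma open_rat_itv (V : set R) x : open V -> V x ->
  exists q, rat_itv q x /\ rat_itv q `<=` V.
Proof.
move=> oV Vx; have /nbhs_ballP [e /= e0 be] : nbhs x V by rewrite openE in oV; apply: oV.
have [q1] : exists q, ratr q \in `]x - e, x[%R.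
  by apply: rat_in_itvoo; rewrite ltrBlDr ltrDl.
have [q2] : exists q, ratr q \in `]x, x + e[%R by apply: rat_in_itvoo; rewrite ltrDl.
rewrite !in_itv /= => /andP [xq2 q2e] /andP [eq1 q1x].
exists (q1, q2); split; first by rewrite /rat_itv /= q1x xq2.
move=> r /andP [/= q1r rq2]; apply: be; rewrite ball_itv /= in_itv /=.
by rewrite (lt_trans eq1 q1r) (lt_trans rq2 q2e).
Qed.

(* A member of F containing x contains the trace of a rational interval
   around x, so it belongs to S q for such a q; if all these S q are finite,
   T' q = S q keeps all of them. *)
Lemma open_tau_cover_countable_sub (X : set R) (F : set (set R)) :
  (forall U, F U -> open_in X U) ->
  (forall x, X x -> infinite_set [set U | F U /\ U x]) ->
  exists2 F', F' `<=` F /\ countable F' &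
    forall x, X x -> infinite_set [set U | F' U /\ U x].
Proof.
move=> F_open F_inf.
pose S q := [set U | F U /\ X `&` rat_itv q `<=` U].
have /choice [T' /all_and3 [T'S T'_cnt T'E]] :=
  fun q => countable_subset_or_infinite (S q).
exists (\bigcup_(q in [set: rat * rat]) T' q).
  split; first by move=> U [q _ /T'S []].
  exact: bigcup_countable.
move=> x Xx; have [[q [qx iSq]]|] := pselect (exists q, rat_itv q x /\ infinite_set (S q)).
  have iT'q : infinite_set (T' q) by case: (T'E q) => [->|].
  apply: contra_not iT'q; apply: sub_finite_set => U T'U; split; first by exists q.
  by have [_] := T'S q U T'U; apply; split.
move=> no_inf_S fin; apply: (F_inf x Xx); apply: sub_finite_set fin => U [FU Ux].
split => //; have [V [oV eU]] := F_open U FU.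
have [q [qx qV]] : exists q, rat_itv q x /\ rat_itv q `<=` V.
  by apply: open_rat_itv oV _; rewrite eU in Ux; case: Ux.
have fSq : finite_set (S q) by apply: contrapT => iSq; apply: no_inf_S; exists q.
have T'qE : T' q = S q by case: (T'E q) => // /(_ (sub_finite_set (@T'S q) fSq)).
exists q => //; rewrite T'qE; split => //.
by rewrite eU => y [Xy qy]; split => //; apply: qV.
Qed.

Lemma covers_of_enum k (X : set R) F : covers_of k X F -> X !=set0 ->
  exists e : nat -> set R, [/\ injective e, forall n, F (e n) &
    forall x, X x -> infinite_set [set n | e n x]].
Proof.
move=> kF [x0 Xx0].
have [F' [F'F cF'] F'_inf] : exists2 F', F' `<=` F /\ countable F' &
    forall x, X x -> infinite_set [set U | F' U /\ U x].
  move/covers_ofE: kF => [[_ F_inf _] F_cnt F_kind].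
  case: k F_cnt F_kind => F_cnt F_kind; last 2 first.
  - by exists F => //; split => //; apply: F_cnt.
  - by exists F => //; split => //; apply: F_cnt.
  by apply: open_tau_cover_countable_sub => // U /F_kind.
have iF' : infinite_set F'.
  by move=> fF'; apply: (F'_inf x0 Xx0); apply: sub_finite_set fF' => U [].
have /card_esym /card_set_bijP [e [eF' e_inj e_surj]] := eq_card_nat cF' iF'.
exists e; split.
- by move=> a b eab; apply: e_inj => //; rewrite inE.
- by move=> n; apply: F'F; apply: eF'.
- move=> x Xx fin; apply: (F'_inf x Xx).
  apply: sub_finite_set (finite_image e fin) => U [F'U Ux].
  by have [n _ enU] := e_surj U F'U; exists n => //=; rewrite enU.
Qed.

End Covers.

Section IndexSets.
Variables (R : realType) (k : tau_kind) (X : set R) (F : set (set R)) (e : nat -> set R).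
Hypothesis kF : covers_of k X F.
Hypothesis e_inj : injective e.
Hypothesis eF : forall n, F (e n).
Let m x := [set n | e n x].
Hypothesis m_infinite : forall x, X x -> infinite_set (m x).

Lemma index_chain x y : X x -> X y ->
  almost_sub (m x) (m y) \/ almost_sub (m y) (m x).
Proof.
move=> Xx Xy; move/covers_ofE: kF => [[_ _ F_chain] _ _].
have e_inj_in (A : set (set R)) : {in e @^-1` A &, injective e} by move=> a b _ _ /e_inj.
by case: (F_chain x y Xx Xy) => fin; [left|right];
  apply: sub_finite_set (finite_preimage (e_inj_in _) fin) => n [].
Qed.

Lemma split_of_splitting_set a :
  (forall x, X x -> infinite_set (m x `&` a) /\ infinite_set (m x `\` a)) ->
  exists F1 F2, [/\ F1 `|` F2 = F, F1 `&` F2 = set0,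
    exists2 G1, G1 `<=` F1 & covers_of k X G1 &
    exists2 G2, G2 `<=` F2 & covers_of k X G2].
Proof.
move=> a_splits; have eaF b : e @` b `<=` F by move=> _ [n _ <-].
have cover_image b : (forall x, X x -> infinite_set (m x `&` b)) ->
    covers_of k X (e @` b).
  move=> mb_inf; apply: covers_of_sub kF (eaF b) _ => x Xx.
  apply: sub_infinite_set (injective_image_infinite e_inj (mb_inf x Xx)).
  by move=> _ [n [exn bn] <-]; split => //; exists n.
exists (e @` a), (F `\` e @` a); split.
- exact/setDUK/eaF.
- by rewrite setDIK.
- by exists (e @` a) => //; apply: cover_image => x /a_splits [].
- exists (e @` (~` a)); last by apply: cover_image => x /a_splits [].
  by move=> _ [n na <-]; split => // -[n' an' /e_inj en]; rewrite en in an'.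
Qed.

Hypothesis index_decides : forall a,
  exists2 x, X x & almost_sub (m x) a \/ almost_sub (m x) (~` a).

Let U := almost_filter (m @` X).

Lemma index_ultrafilter : nonprincipal_ultrafilter U.
Proof.
apply: almost_filter_ultrafilter.
- by move=> _ [x Xx <-]; apply: m_infinite.
- by move=> _ _ [x Xx <-] [y Xy <-]; apply: index_chain.
- by move=> a; have [x Xx ma] := index_decides a; exists (m x) => //; exists x.
Qed.

Section Trace.
Variable Y : set R.
Hypothesis YX : Y `<=` X.
Let trace n := e n `&` Y.
Let covering := [set n | Y `<=` e n].
Let traces := trace @` ~` covering.

(* If y lay in finitely many traces g j, the non-covering indices in m y
   would fall into finitely many classes s j, one of them in the ultrafilter.
   That class meets every m w, so the single trace g j contains all of Y,
   although it is the trace of a non-covering e n0. *)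
Lemma traces_infinite_at y : finite_set covering -> Y y ->
  infinite_set [set V | traces V /\ V y].
Proof.
move=> fin_cov Yy /finite_setP [K] /card_esym /card_set_bijP [g [gV _ g_surj]].
pose s j := [set n | ~ covering n /\ trace n = g j].
have [UI _ _ _ _] := index_ultrafilter.
have Um w : Y w -> U (m w).
  by move=> Yw; apply: almost_filter_base; exists w => //; apply: YX.
have [j jK Usj] : exists2 j, (j < K)%N & U (s j).
  apply: (ultrafilter_bigcup index_ultrafilter).
  have Umy : U (m y `\` covering).
    have [b mb_b b_my] := Um y Yy; exists b => //; apply: almost_sub_trans b_my _.
    by apply: sub_finite_set fin_cov => n [myn nD]; apply: contrapT => un; apply: nD.
  apply: almost_filterS Umy _ => n [myn un].
  have [j jK gj] := g_surj (trace n) (conj (ex_intro2 _ _ n un erefl) (conj myn Yy)).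
  by exists j => //; split.
have [[n0 un0 trace_n0] _] := gV j jK.
apply: un0 => w Yw.
have [n [ewn [_ trace_n]]] := ultrafilter_neq0 index_ultrafilter (UI _ _ (Um w Yw) Usj).
have : trace n0 w by rewrite trace_n0 -trace_n; split.
by case.
Qed.

Lemma traces_cover : finite_set covering -> covers_of k Y traces.
Proof.
move=> fin_cov; move/covers_ofE: kF => [_ F_cnt F_kind]; apply/covers_ofE; split.
- split; last 2 first.
  + by move=> y; apply: traces_infinite_at.
  + move=> y w Yy Yw; case: (index_chain (YX Yy) (YX Yw)) => fin; [left|right];
      apply: sub_finite_set (finite_image trace fin) => _ [[n un <-] [[eny _] nw]];
      by exists n => //; split => // ewn; apply: nw.
  split; [by move=> _ [n _ <-] ? []|apply/seteqP; split|].
  + by move=> y [_ [n _ <-] []].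
  + move=> y Yy; have /infinite_setN0 [V [? ?]] := traces_infinite_at fin_cov Yy.
    by exists V.
  + by move=> _ [n un <-] Ytr; apply: un => y /Ytr [].
- by move=> _; apply: card_le_trans (card_image_le _ _) _; apply: countableP.
- by move=> _ [n _ <-]; apply: kind_set_trace YX (F_kind _ (eF n)).
Qed.

Lemma subcover_indices_infinite G y : G `<=` traces -> covers_of k Y G -> Y y ->
  infinite_set (m y `&` [set n | ~ covering n /\ G (trace n)]).
Proof.
move=> Gtr /covers_ofE [[_ G_inf _] _ _] Yy fin; apply: (G_inf y Yy).
apply: sub_finite_set (finite_image trace fin) => V [GV Vy].
by have [n un trn] := Gtr V GV; exists n => //; rewrite -trn in GV Vy; case: Vy.
Qed.

Lemma infinite_covering_lower_bound : infinite_set covering ->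
  exists2 z, X z & forall y, Y y -> almost_sub (m z) (m y).
Proof.
move=> inf_cov; have covering_sub y : Y y -> covering `<=` m y by move=> Yy n; apply.
have [x Xx mx_cov] := index_decides covering; exists x => // y Yy.
case: (index_chain Xx (YX Yy)) => // my_mx; case: mx_cov => mx_cov.
  exact: almost_sub_trans mx_cov (subset_almost_sub (covering_sub y Yy)).
exfalso; apply: inf_cov; have := almost_sub_trans my_mx mx_cov.
by apply: sub_finite_set => n cov_n; split; [apply: covering_sub|].
Qed.

(* m x is almost inside, or almost disjoint from, the indices of D1; if some
   m y were almost inside m x, the subcover taken from the other side would
   contain y only finitely often. *)
Lemma finite_covering_lower_bound : finite_set covering ->
  SplitProp (covers_of k Y) (covers_of k Y) ->
  exists2 z, X z & forall y, Y y -> almost_sub (m z) (m y).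
Proof.
move=> fin_cov Ysplit.
have [D1 [D2 [D12 D1D2 [G1 G1D1 kG1] [G2 G2D2 kG2]]]] := Ysplit _ (traces_cover fin_cov).
pose a := [set n | ~ covering n /\ D1 (trace n)].
have [x Xx mxa] := index_decides a; exists x => // y Yy.
case: (index_chain Xx (YX Yy)) => // my_mx; exfalso.
case: mxa => mxa.
  have G2tr : G2 `<=` traces by rewrite -D12 => V /G2D2; right.
  apply: (subcover_indices_infinite G2tr kG2 Yy).
  apply: sub_finite_set (almost_sub_trans my_mx mxa) => n [myn [_ G2n]].
  split => // -[_ D1n]; have : (D1 `&` D2) (trace n) by split => //; apply: G2D2.
  by rewrite D1D2.
have G1tr : G1 `<=` traces by rewrite -D12 => V /G1D1; left.
apply: (subcover_indices_infinite G1tr kG1 Yy).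
apply: sub_finite_set (almost_sub_trans my_mx mxa) => n [myn [un G1n]].
by split => // /=; apply; split => //; apply: G1D1.
Qed.

Lemma split_subspace_lower_bound : SplitProp (covers_of k Y) (covers_of k Y) ->
  exists2 z, X z & forall y, Y y -> almost_sub (m z) (m y).
Proof.
have [/infinite_covering_lower_bound //|/contrapT] := pselect (infinite_set covering).
exact: finite_covering_lower_bound.
Qed.

End Trace.

Lemma lower_bounds_u_base (I : Type) (Xs : I -> set R) (z : I -> R) :
  X = \bigcup_(i in [set: I]) Xs i -> (forall i, X (z i)) ->
  (forall i y, Xs i y -> almost_sub (m (z i)) (m y)) ->
  u_base [set m (z i) | i in [set: I]].
Proof.
move=> XE zX z_lb; split; first by move=> _ [i _ <-]; apply: m_infinite.
exists (almost_filter [set m (z i) | i in [set: I]]); split => //.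
rewrite (@almost_filter_coinitial _ _ (m @` X)).
- exact: index_ultrafilter.
- by move=> b [i _ <-]; exists (z i).
- move=> c [y]; rewrite XE => -[i _ Xiy] <-.
  by exists (m (z i)); [exists i|apply: z_lb].
Qed.

End IndexSets.

Theorem theorem6p4 (k : tau_kind) (R : realType) (I : Type)
    (X : set R) (Xs : I -> set R) :
  infinite_set X ->
  X = \bigcup_(i in [set: I]) Xs i ->
  (forall i, SplitProp (covers_of k (Xs i)) (covers_of k (Xs i))) ->
  (lt_u I \/ countable [set: I]) ->
  SplitProp (covers_of k X) (covers_of k X).
Proof.
move=> X_inf XE Xs_split I_small F kF.
have [e [e_inj eF m_inf]] := covers_of_enum kF (infinite_setN0 X_inf).
pose m x := [set n | e n x].
have [[a a_splits]|no_split] := pselect (exists a, forall x, X x ->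
    infinite_set (m x `&` a) /\ infinite_set (m x `\` a)).
  exact: (split_of_splitting_set kF e_inj eF a_splits).
have decides a : exists2 x, X x & almost_sub (m x) a \/ almost_sub (m x) (~` a).
  apply: contrapT => undecided; apply: no_split; exists a => x Xx.
  by split=> fin; apply: undecided; exists x => //; [right|left];
    rewrite /almost_sub ?setDE ?setCK.
have /choice [z /all_and2 [zX z_lb]] : forall i,
    exists z, X z /\ forall y, Xs i y -> almost_sub (m z) (m y).
  move=> i; have XsX : Xs i `<=` X by rewrite XE => y; exists i.
  have [z Xz z_lb] := split_subspace_lower_bound kF e_inj eF m_inf decides XsX (Xs_split i).
  by exists z.
have uB := lower_bounds_u_base kF e_inj eF m_inf decides XE zX z_lb.
exfalso; case: I_small => [I_lt_u|I_cnt].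
- by have [_ /(_ (card_image_le _ _))] := I_lt_u _ uB.
- exact: u_base_uncountable uB (card_le_trans (card_image_le _ _) I_cnt).
Qed.
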